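(* Let $q$ be a prime power, let $p$ be the characteristic of $\mathbb{F}_q$, and let $r = 2n+1$ be a prime such that $q$ is a primitive root modulo $r$. Let $\beta \in \mathbb{F}_{q^{2n}}$ be a primitive $r$th root of unity and put $\alpha = \beta + \beta^{-1} \in \mathbb{F}_{q^n}$. Then the multiplicative order $L_n$ of $\alpha$ satisfies $$L_n \geqslant P(n-1, p-1).$$
   Context: For integers $s \geqslant 1$ and $v \geqslant 0$, $P(s,v)$ denotes the number of integer partitions of $s$ in which each part appears at most $v$ times, i.e. the number of solutions of $\sum_{j=1}^{s} u_j j = s$ in non-negative integers $u_1,\ldots,u_s \leqslant v$. The element $\alpha$ is called a Gauss period of type $(n,2)$. *)

From mathcomp Require Import all_boot all_algebra all_field.
Set Implicit Arguments. Unset Strict Implicit. Unset Printing Implicit Defensive.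
Import GRing.Theory.

(* P s v : number of partitions of s in which each part appears at most v
   times, i.e. number of (u_1,...,u_s) with 0 <= u_j <= v and
   sum_j u_j * j = s.  Here u_j is stored at index j-1 (an ordinal of s). *)
Definition P (s v : nat) : nat :=
  #|[set u : {ffun 'I_s -> 'I_v.+1} | \sum_(j < s) (u j : nat) * j.+1 == s]|.

Definition prim_root_mod (q r : nat) : bool :=
  ((r.-1).-primitive_root (q%:R : 'F_r))%R.

(* Since q generates (Z/rZ)^*, each period beta^j + beta^-j with 0 < j < r is a
   Frobenius conjugate alpha^(p^m) of alpha, so every product
   prod_(j <= n-1) (beta^j + beta^-j)^(u_j), for u a partition of n-1 with each
   part repeated fewer than p times, is a power of alpha.  These products are
   pairwise distinct.  Writing beta^j + beta^-j = beta^-j (1 + gamma^j) with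
   gamma = beta^2, two equal products make gamma a root of the difference D of
   the polynomials prod_j (1 + X^j)^(u_j).  D has coefficients in F_p, so it
   also vanishes at the conjugates gamma^j, 1 <= j <= n, while deg D <= n - 1;
   hence D = 0.  Finally prod_j (1 + X^j)^(u_j) determines u when all u_j < p:
   the coefficient of X^j in it, for the least j with u_j > 0, is u_j mod p. *)

From mathcomp Require Import all_boot all_algebra all_field.
From mathcomp Require Import ring zify.
Set Implicit Arguments.
Unset Strict Implicit.
Unset Printing Implicit Defensive.
Import GRing.Theory.
Local Open Scope ring_scope.

Section PolyFacts.
Variables (K : fieldType) (p : nat).
Hypothesis hchar : p \in [pchar K].

Definition one_mod_Xn (m : nat) (A : {poly K}) := exists R, A = 1 + 'X^m * R.

Lemma one_mod_XnM m A B : one_mod_Xn m A -> one_mod_Xn m B -> one_mod_Xn m (A * B).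
Proof. by move=> [R ->] [S ->]; exists (R + S + 'X^m * R * S); ring. Qed.

Lemma one_mod_Xn_exp1X m l c : (m <= l)%N -> one_mod_Xn m ((1 + 'X^l) ^+ c).
Proof.
move=> le_ml; elim: c => [|c IHc]; first by exists 0; rewrite expr0 mulr0 addr0.
rewrite exprS; apply: one_mod_XnM IHc.
by exists 'X^(l - m); rewrite -exprD subnKC.
Qed.

Lemma coef0_one_mod_Xn m A : one_mod_Xn m.+1 A -> A`_0 = 1.
Proof. by move=> [R ->]; rewrite coefD coef1 coefXnM addr0. Qed.

Lemma one_mod_Xn_neq0 m A : one_mod_Xn m.+1 A -> A != 0.
Proof.
move/coef0_one_mod_Xn => A0; apply: contra_eq_neq A0 => ->.
by rewrite coef0 eq_sym oner_neq0.
Qed.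

Lemma coef_exp1X_mul w c A :
  one_mod_Xn w.+2 A -> ((1 + 'X^(w.+1)) ^+ c * A)`_w.+1 = c%:R.
Proof.
move=> A1; elim: c => [|c IHc].
  by case: A1 => R ->; rewrite mul1r coefD coef1 coefXnM ltnSn addr0.
have B1 : one_mod_Xn 1 ((1 + 'X^(w.+1)) ^+ c * A).
  apply: one_mod_XnM; first exact: one_mod_Xn_exp1X.
  by case: A1 => R ->; exists ('X^(w.+1) * R); rewrite mulrA -exprD.
rewrite exprS -mulrA mulrDl mul1r coefD coefXnM ltnn subnn IHc.
by rewrite (coef0_one_mod_Xn B1) mulrS addrC.
Qed.

Lemma exp1X_mul_cancel w a b A B :
  (a < p)%N -> (b < p)%N -> one_mod_Xn w.+2 A -> one_mod_Xn w.+2 B ->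
  (1 + 'X^(w.+1)) ^+ a * A = (1 + 'X^(w.+1)) ^+ b * B -> a = b /\ A = B.
Proof.
wlog le_ba : a b A B / (b <= a)%N => [IH ha hb hA hB e|ha hb hA hB e].
  have [le_ba|/ltnW le_ab] := leqP b a; first exact: IH.
  by case: (IH _ _ _ _ le_ab hb ha hB hA (esym e)) => -> ->.
have {}e : (1 + 'X^(w.+1)) ^+ (a - b) * A = B.
  move: e; rewrite -{1}(subnKC le_ba) exprD -mulrA; apply: mulfI.
  exact: one_mod_Xn_neq0 (one_mod_Xn_exp1X b (ltn0Sn w)).
have p_dvd : (p %| a - b)%N.
  rewrite (dvdn_pcharf hchar) -(coef_exp1X_mul _ hA) e.
  by rewrite -[B]mul1r -(expr0 (1 + 'X^(w.+1))) coef_exp1X_mul.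
have eq_ab : a = b.
  suff : (a - b = 0)%N by lia.
  apply: contraTeq p_dvd => ab_neq0; rewrite gtnNdvd ?lt0n //.
  exact: leq_ltn_trans (leq_subr b a) ha.
by split=> //; rewrite eq_ab subnn expr0 mul1r in e.
Qed.

(* The offset [o] lets the injectivity proof peel off the lowest factor. *)
Definition part_poly (o N : nat) (u : 'I_N -> nat) : {poly K} :=
  \prod_(i < N) (1 + 'X^((i + o).+1)) ^+ u i.

Lemma part_poly_recl o N (u : 'I_N.+1 -> nat) :
  part_poly o u = (1 + 'X^(o.+1)) ^+ u ord0 * part_poly o.+1 (fun i => u (lift ord0 i)).
Proof. by rewrite /part_poly big_ord_recl; under eq_bigr do rewrite /= addSnnS. Qed.

Lemma one_mod_Xn_part_poly o N (u : 'I_N -> nat) : one_mod_Xn o.+1 (part_poly o u).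
Proof.
apply: (big_ind (one_mod_Xn o.+1)); first by exists 0; rewrite mulr0 addr0.
  exact: one_mod_XnM.
by move=> i _; apply: one_mod_Xn_exp1X; rewrite ltnS leq_addl.
Qed.

Lemma part_poly_inj o N (u v : 'I_N -> nat) :
  (forall i, u i < p)%N -> (forall i, v i < p)%N ->
  part_poly o u = part_poly o v -> u =1 v.
Proof.
elim: N o u v => [|N IHN] o u v ltup ltvp; first by move=> _ [].
rewrite !part_poly_recl => e.
have [eu0 eQ] := exp1X_mul_cancel (ltup _) (ltvp _)
  (one_mod_Xn_part_poly _ _) (one_mod_Xn_part_poly _ _) e.
have {}IHN := IHN _ _ _ (fun i => ltup _) (fun i => ltvp _) eQ.
by move=> i; case: (unliftP ord0 i) => [j ->|->].
Qed.

Lemma size_part_poly o N (u : 'I_N -> nat) :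
  size (part_poly o u) = (\sum_(i < N) u i * (i + o).+1).+1.
Proof.
have size_factor c l : size ((1 + 'X^(l.+1) : {poly K}) ^+ c) = (c * l.+1).+1.
  have nz : (0 < size ((1 + 'X^(l.+1) : {poly K}) ^+ c))%N.
    by rewrite size_poly_gt0; exact: one_mod_Xn_neq0 (one_mod_Xn_exp1X c (ltn0Sn l)).
  rewrite -(prednK nz) size_exp addrC -polyC1 size_XnaddC //.
  by rewrite mulnC.
rewrite /part_poly size_prod => [|i _]; last first.
  exact: one_mod_Xn_neq0 (one_mod_Xn_exp1X _ (ltn0Sn _)).
under eq_bigr do rewrite size_factor -addn1.
by rewrite big_split /= sum1_card card_ord -addSn addnK.
Qed.

Lemma part_poly_frobenius o N (u : 'I_N -> nat) :
  map_poly (pFrobenius_aut hchar) (part_poly o u) = part_poly o u.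
Proof.
rewrite rmorph_prod; apply: eq_bigr => i _.
by rewrite rmorphXn rmorphD rmorph1 rmorphXn /= map_polyX.
Qed.

Lemma root_frobenius_fixed (D : {poly K}) x m :
  map_poly (pFrobenius_aut hchar) D = D -> root D x -> root D (x ^+ (p ^ m)).
Proof.
move=> fixD; elim: m => [|m IHm] rootx; first by rewrite expr1.
rewrite expnSr exprM -(pFrobenius_autE hchar) -fixD rootE horner_map.
by rewrite (rootP (IHm rootx)) rmorph0.
Qed.

End PolyFacts.

Lemma prim_root_neq0 (R : idomainType) m (z : R) : m.-primitive_root z -> z != 0.
Proof.
move=> hz; apply: contra_eq_neq (prim_expr_order hz) => ->.
by rewrite expr0n gtn_eqF ?(prim_order_gt0 hz) // eq_sym oner_neq0.
Qed.

Lemma finField_prim_order (F : finFieldType) (x : F) :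
  x != 0 -> exists L, L.-primitive_root x.
Proof.
move=> x_neq0; have card_gt1 : (1 < #|F|)%N.
  by apply/card_gt1P; exists 0, 1; rewrite !inE eq_sym oner_neq0.
have x_card1 : x ^+ #|F|.-1 = 1.
  by apply: (mulfI x_neq0); rewrite mulr1 -exprS prednK ?expf_card // ltnW.
have [L hL _] := prim_order_exists (ltac:(lia) : (0 < #|F|.-1)%N) x_card1.
by exists L.
Qed.

Lemma card_le_prim_order (R : nzRingType) (T : finType) (U : {set T})
    (f : T -> R) (a : R) L :
  L.-primitive_root a -> {in U &, injective f} ->
  (forall u, u \in U -> exists e, f u = a ^+ e) -> (#|U| <= L)%N.
Proof.
move=> hL injf f_expr.
rewrite cardE -(size_map f) -[L](size_iota 0) -(size_map (GRing.exp a)).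
apply: uniq_leq_size => [|y /mapP[u]].
  by rewrite map_inj_in_uniq ?enum_uniq // => x y; rewrite !mem_enum; apply: injf.
rewrite mem_enum => /f_expr[e ->] ->; apply/mapP; exists (e %% L)%N.
  by rewrite mem_iota ltn_pmod ?(prim_order_gt0 hL).
by rewrite prim_expr_mod.
Qed.

Lemma prim_root_mod_expn q r :
  prime r -> prim_root_mod q r ->
  forall j, (0 < j < r)%N -> exists i, (q ^ i = j %[mod r])%N.
Proof.
move=> r_prime q_prim j /andP[j_gt0 j_ltr].
have j_neq0 : (j%:R : 'F_r) != 0.
  apply/eqP => j_eq0; have := val_Fp_nat r_prime j.
  by rewrite j_eq0 modn_small // => j0; move: j_gt0; rewrite -j0.
have j_unity : (j%:R : 'F_r) ^+ r.-1 = 1.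
  apply: (mulfI j_neq0); rewrite mulr1 -exprS prednK ?prime_gt0 //.
  by rewrite -[in X in _ ^+ X](card_Fp r_prime) expf_card.
have [i q_i] := prim_rootP q_prim j_unity.
by exists i; rewrite -(val_Fp_nat r_prime) -(val_Fp_nat r_prime j) natrX q_i.
Qed.

Definition part_weight N (u : 'I_N -> nat) := (\sum_(j < N) u j * j.+1)%N.

Lemma size_part_poly0 (K : fieldType) N (u : 'I_N -> nat) :
  size (part_poly K 0 u) = (part_weight u).+1.
Proof. by rewrite size_part_poly; under eq_bigr do rewrite addn0. Qed.

Section GaussPeriod.
Variables (K : fieldType) (p n : nat) (beta : K).
Let r := (2 * n).+1.
Hypotheses (hchar : p \in [pchar K]) (hbeta : r.-primitive_root beta).
Hypothesis frob_orbit : forall j, (0 < j < r)%N -> exists m, (p ^ m = j %[mod r])%N.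
Local Notation alpha := (beta + beta^-1).

Lemma prim_root_expr_frob (z : K) j :
  r.-primitive_root z -> (0 < j < r)%N -> exists m, z ^+ j = z ^+ (p ^ m).
Proof.
move=> hz /frob_orbit[m p_m]; exists m.
by rewrite -(prim_expr_mod hz) -p_m prim_expr_mod.
Qed.

Lemma prim_root_beta2 : r.-primitive_root (beta ^+ 2).
Proof. by rewrite prim_root_exp_coprime // coprime2n /r oddS oddM. Qed.

Lemma period_expr_factor w :
  beta ^+ w + (beta ^+ w)^-1 = (beta ^+ w)^-1 * (1 + (beta ^+ 2) ^+ w).
Proof.
have bw_neq0 : beta ^+ w != 0 by rewrite expf_neq0 ?(prim_root_neq0 hbeta).
by rewrite -exprM mulnC exprM mulrDr mulr1 expr2 mulrA mulVf // mul1r addrC.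
Qed.

Lemma alpha_neq0 : (0 < n)%N -> alpha != 0.
Proof.
move=> n_gt0; rewrite -[beta]expr1 period_expr_factor mulf_neq0 ?invr_eq0 //.
  by rewrite expf_neq0 ?(prim_root_neq0 hbeta).
rewrite expr1 addrC addr_eq0; apply/negP => /eqP b2_eqN1.
have : (beta ^+ 2) ^+ 2 == (beta ^+ 2) ^+ 0 by rewrite b2_eqN1 sqrrN expr1n.
by rewrite (eq_prim_root_expr prim_root_beta2) mod0n modn_small /r // ltnS leq_pmulr.
Qed.

Lemma period_expr_frob j :
  (0 < j < r)%N -> exists m, beta ^+ j + (beta ^+ j)^-1 = alpha ^+ (p ^ m).
Proof.
move=> /(prim_root_expr_frob hbeta)[m ->]; exists m.
rewrite exprDn_pchar ?exprVn //.
by rewrite (eq_pnat _ (pcharf_eq hchar)) pnatX pnat_id ?(pcharf_prime hchar).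
Qed.

Definition gauss_prod N (u : 'I_N -> nat) : K :=
  \prod_(j < N) (beta ^+ j.+1 + (beta ^+ j.+1)^-1) ^+ u j.

Lemma gauss_prod_alpha_expr N (u : 'I_N -> nat) :
  (N < r)%N -> exists e, gauss_prod u = alpha ^+ e.
Proof.
move=> N_ltr; apply: (big_ind (fun x => exists e, x = alpha ^+ e)).
- by exists 0%N.
- by move=> _ _ [e1 ->] [e2 ->]; exists (e1 + e2)%N; rewrite exprD.
move=> j _; have [|m ->] := @period_expr_frob j.+1.
  by rewrite ltn0Sn (leq_ltn_trans (ltn_ord j) N_ltr).
by exists (p ^ m * u j)%N; rewrite exprM.
Qed.

Lemma gauss_prod_part_poly N (u : 'I_N -> nat) :
  gauss_prod u = (beta ^+ part_weight u)^-1 * (part_poly K 0 u).[beta ^+ 2].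
Proof.
rewrite /gauss_prod; under eq_bigr do rewrite period_expr_factor exprMn.
rewrite big_split /=; congr (_ * _).
  under eq_bigr do rewrite exprVn -exprM mulnC.
  by rewrite prodfV prodrXr.
rewrite /part_poly horner_prod; apply: eq_bigr => j _.
by rewrite horner_exp hornerD hornerC hornerXn addn0.
Qed.

Lemma frobenius_fixed_root_eq0 (z : K) (D : {poly K}) :
  r.-primitive_root z -> map_poly (pFrobenius_aut hchar) D = D ->
  (size D <= n)%N -> root D z -> D = 0.
Proof.
move=> hz fixD size_D root_z; apply/eqP; apply: contraTT size_D => D_neq0.
rewrite -ltnNge -(size_iota 1 n) -(size_map (GRing.exp z)).
apply: max_poly_roots D_neq0 _ _.
  apply/allP => x /mapP[j]; rewrite mem_iota => hj ->.
  have [|m ->] := prim_root_expr_frob hz (j := j); first by rewrite /r; lia.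
  exact: root_frobenius_fixed.
rewrite map_inj_in_uniq ?iota_uniq // => i j; rewrite !mem_iota => hi hj /eqP.
by rewrite (eq_prim_root_expr hz) !modn_small /r; [move/eqP | lia | lia].
Qed.

Lemma gauss_prod_inj N (u v : 'I_N -> nat) :
  (forall i, u i < p)%N -> (forall i, v i < p)%N ->
  part_weight u = part_weight v -> (part_weight u < n)%N ->
  gauss_prod u = gauss_prod v -> u =1 v.
Proof.
move=> ltup ltvp wuv wu_ltn; rewrite !gauss_prod_part_poly -wuv.
move/mulfI; rewrite invr_eq0 expf_neq0 ?(prim_root_neq0 hbeta) // => /(_ isT) e.
apply: (part_poly_inj (o := 0) hchar ltup ltvp); apply/eqP; rewrite -subr_eq0; apply/eqP.
apply: (frobenius_fixed_root_eq0 prim_root_beta2).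
- by rewrite rmorphB /= !part_poly_frobenius.
- by rewrite (leq_trans (size_polyD _ _)) // size_polyN !size_part_poly0 -wuv maxnn.
- by rewrite rootE hornerD hornerN e subrr.
Qed.

End GaussPeriod.

Theorem theorem1 (p k q n r : nat) (K : finFieldType) (beta : K)
  (hp : prime p) (hk : (0 < k)%N) (hq : q = (p ^ k)%N)
  (hchar : p \in [pchar K]) (hK : #|K| = (q ^ (2 * n))%N)
  (hr : r = (2 * n).+1) (hrprime : prime r) (hprim : prim_root_mod q r)
  (hbeta : r.-primitive_root beta) :
  let alpha := beta + beta^-1 in
  exists L : nat, L.-primitive_root alpha /\ (P n.-1 p.-1 <= L)%N.
Proof.
move=> alpha; subst q r.
have n_gt0 : (0 < n)%N by rewrite lt0n; apply: contraTneq hrprime => ->.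
have frob_orbit j : (0 < j < (2 * n).+1)%N -> exists m, (p ^ m = j %[mod (2 * n).+1])%N.
  by case/(prim_root_mod_expn hrprime hprim) => i p_i; exists (k * i)%N; rewrite expnM.
have [L hL] := finField_prim_order (alpha_neq0 hbeta n_gt0).
exists L; split=> //.
have ltup (u : {ffun 'I_n.-1 -> 'I_p.-1.+1}) j : (u j < p)%N.
  exact: leq_trans (ltn_ord (u j)) (eq_leq (prednK (prime_gt0 hp))).
pose f (u : {ffun 'I_n.-1 -> 'I_p.-1.+1}) := gauss_prod beta (fun j => val (u j)).
rewrite /P; apply: (card_le_prim_order (f := f) hL).
- move=> u v; rewrite !inE -!/(part_weight _) => /eqP wu /eqP wv.
  move/(gauss_prod_inj hchar hbeta frob_orbit (ltup u) (ltup v)) => uv.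
  apply/ffunP => j; apply/val_inj/uv; first by rewrite wu wv.
  by rewrite wu ltn_predL.
- move=> u _; apply: (gauss_prod_alpha_expr hchar hbeta frob_orbit).
  by rewrite (leq_ltn_trans (leq_pred n)) // ltnS leq_pmull.
Qed.
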